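(* Let $\mathcal T$ be a self-orthogonal subcategory of $\mathcal C$. Then ${}_{\mathcal T}\mathcal X$ is closed under extensions, under direct summands, and under cones of inflations; the last means: for every $\mathbb E$-triangle $A\to B\to C\dashrightarrow$ with $A,B\in{}_{\mathcal T}\mathcal X$ one has $C\in{}_{\mathcal T}\mathcal X$.
   Context: $(\mathcal C,\mathbb E,\mathfrak s)$ is an extriangulated category in the sense of Nakaoka–Palu, Krull–Schmidt, with enough projectives and enough injectives; subcategories are full, additive, closed under isomorphisms. Higher extensions: $\mathbb E^1=\mathbb E$, $\mathbb E^{i+1}(X,Y)=\mathbb E(\Omega^iX,Y)\cong\mathbb E(X,\Sigma^iY)$. $\mathcal T$ is self-orthogonal if $\mathbb E^i(T_1,T_2)=0$ for all $i\ge1$, $T_1,T_2\in\mathcal T$. $\mathcal T^{\perp}=\{Y:\mathbb E^i(T,Y)=0\ \forall i\ge1,\forall T\in\mathcal T\}$. ${}_{\mathcal T}\mathcal X$ is the subcategory of objects $A$ for which there exist $\mathbb E$-triangles $K_{i+1}\to T_i\to K_i\dashrightarrow$ for all $i\ge0$ with $K_0=A$, $T_i\in\mathcal T$ and $K_{i+1}\in\mathcal T^{\perp}$ for all $i$. Closed under extensions: for every $\mathbb E$-triangle $A\to B\to C\dashrightarrow$ with $A,C$ in the subcategory, $B$ is in it. *)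

From mathcomp Require Import all_boot all_algebra.
Import GRing.Theory.
Local Open Scope ring_scope.

Record PreAddCat := {
  obj :> Type;
  hom : obj -> obj -> zmodType;
  comp : forall A B C : obj, hom B C -> hom A B -> hom A C;
  idm : forall A : obj, hom A A;
  compA : forall (A B C D : obj) (f : hom C D) (g : hom B C) (h : hom A B),
      comp A C D f (comp A B C g h) = comp A B D (comp B C D f g) h;
  comp1m : forall (A B : obj) (f : hom A B), comp A B B (idm B) f = f;
  compm1 : forall (A B : obj) (f : hom A B), comp A A B f (idm A) = f;
  compDl : forall (A B C : obj) (f g : hom B C) (h : hom A B),
      comp A B C (f + g) h = comp A B C f h + comp A B C g h;
  compDr : forall (A B C : obj) (f : hom B C) (g h : hom A B),
      comp A B C f (g + h) = comp A B C f g + comp A B C f h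
}.
Arguments hom {p} _ _.
Arguments comp {p A B C} _ _.
Arguments idm {p} A.

Section Additive.
Variable C : PreAddCat.

Definition iso (X Y : C) : Prop :=
  exists (f : hom X Y) (g : hom Y X), comp g f = idm X /\ comp f g = idm Y.

Definition biprod_ax {X Y S : C} (i1 : hom X S) (i2 : hom Y S)
    (p1 : hom S X) (p2 : hom S Y) : Prop :=
  [/\ comp p1 i1 = idm X, comp p2 i2 = idm Y, comp p1 i2 = 0,
      comp p2 i1 = 0 & comp i1 p1 + comp i2 p2 = idm S].

Record biprod (X Y : C) := {
  bp_obj : C;
  bp_in1 : hom X bp_obj;
  bp_in2 : hom Y bp_obj;
  bp_pr1 : hom bp_obj X;
  bp_pr2 : hom bp_obj Y;
  bp_ax : biprod_ax bp_in1 bp_in2 bp_pr1 bp_pr2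
}.

Definition isAdditive : Prop :=
  (exists Z : C, idm Z = 0) /\
  (forall X Y : C, exists S (i1 : hom X S) (i2 : hom Y S) p1 p2,
      biprod_ax i1 i2 p1 p2).

Definition hom_unit {X : C} (f : hom X X) : Prop :=
  exists g : hom X X, comp g f = idm X /\ comp f g = idm X.
Definition local_obj (X : C) : Prop :=
  idm X <> 0 /\ forall f : hom X X, hom_unit f \/ hom_unit (idm X - f).

Definition KrullSchmidt : Prop :=
  forall X : C, exists (n : nat) (Xs : 'I_n -> C)
    (i : forall k, hom (Xs k) X) (p : forall k, hom X (Xs k)),
    [/\ forall k, comp (p k) (i k) = idm (Xs k),
        forall k l, k != l -> comp (p k) (i l) = 0,
        \sum_(k < n) comp (i k) (p k) = idm X
      & forall k, local_obj (Xs k)].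
End Additive.

Arguments iso {C} X Y.
Arguments biprod {C} X Y.
Arguments bp_obj {C X Y} b.
Arguments bp_in1 {C X Y} b.
Arguments bp_in2 {C X Y} b.
Arguments bp_pr1 {C X Y} b.
Arguments bp_pr2 {C X Y} b.

(* Ext Z A = E(Z, A);  push a = a_* ;  pull c = c^* ;
   real d x y  means  s(d) = [A -x-> B -y-> Z]  (x,y realize d). *)
Record ExtriData (C : PreAddCat) := {
  Ext : C -> C -> zmodType;
  push : forall (Z A A' : C), hom A A' -> Ext Z A -> Ext Z A';
  pull : forall (Z Z' A : C), hom Z' Z -> Ext Z A -> Ext Z' A;
  real : forall (Z A B : C), Ext Z A -> hom A B -> hom B Z -> Prop
}.
Arguments Ext {C} e _ _.
Arguments push {C} e {Z A A'} a d.
Arguments pull {C} e {Z Z' A} c d.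
Arguments real {C} e {Z A B} d x y.

Section Extri.
Variables (C : PreAddCat) (e : ExtriData C).

Definition seq_equiv {A B B' Z : C} (x : hom A B) (y : hom B Z)
    (x' : hom A B') (y' : hom B' Z) : Prop :=
  exists (b : hom B B') (b' : hom B' B),
    [/\ comp b' b = idm B, comp b b' = idm B', comp b x = x' & comp y' b = y].

Definition ET1 : Prop :=
  (forall (Z A A' : C) (a : hom A A') (d1 d2 : Ext e Z A),
        push e a (d1 - d2) = push e a d1 - push e a d2) /\
      (forall (Z Z' A : C) (c : hom Z' Z) (d1 d2 : Ext e Z A),
        pull e c (d1 - d2) = pull e c d1 - pull e c d2) /\
      (forall (Z A A' : C) (a a' : hom A A') (d : Ext e Z A),
        push e (a + a') d = push e a d + push e a' d) /\
      (forall (Z Z' A : C) (c c' : hom Z' Z) (d : Ext e Z A),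
        pull e (c + c') d = pull e c d + pull e c' d) /\
      (forall (Z A : C) (d : Ext e Z A), push e (idm A) d = d) /\
      (forall (Z A : C) (d : Ext e Z A), pull e (idm Z) d = d) /\
      (forall (Z A A' A'' : C) (a : hom A A') (a' : hom A' A'') (d : Ext e Z A),
        push e (comp a' a) d = push e a' (push e a d)) /\
      (forall (Z Z' Z'' A : C) (c : hom Z' Z) (c' : hom Z'' Z') (d : Ext e Z A),
        pull e (comp c c') d = pull e c' (pull e c d))
    /\ (forall (Z Z' A A' : C) (a : hom A A') (c : hom Z' Z) (d : Ext e Z A),
        push e a (pull e c d) = pull e c (push e a d)).

(* s is a realization (Def 2.9) whose values are equivalence classes *)
Definition is_realization : Prop :=
  [/\ (forall (Z A : C) (d : Ext e Z A), exists B (x : hom A B) (y : hom B Z),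
          real e d x y),
      (forall (Z A B B' : C) (d : Ext e Z A) (x : hom A B) (y : hom B Z)
          (x' : hom A B') (y' : hom B' Z),
          real e d x y -> (real e d x' y' <-> seq_equiv x y x' y'))
    & (forall (A Z A' Z' B B' : C) (d : Ext e Z A) (d' : Ext e Z' A')
          (a : hom A A') (c : hom Z Z') (x : hom A B) (y : hom B Z)
          (x' : hom A' B') (y' : hom B' Z'),
          push e a d = pull e c d' -> real e d x y -> real e d' x' y' ->
          exists b : hom B B', comp b x = comp x' a /\ comp y' b = comp c y)].

Definition ET2 : Prop :=
  [/\ is_realization,
      (forall (A Z : C) (S : biprod A Z),
          real e (0 : Ext e Z A) (bp_in1 S) (bp_pr2 S))
    & (forall (A A' B B' Z Z' : C) (bA : biprod A A') (bB : biprod B B')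
          (bZ : biprod Z Z') (d : Ext e Z A) (d' : Ext e Z' A')
          (x : hom A B) (y : hom B Z) (x' : hom A' B') (y' : hom B' Z'),
          real e d x y -> real e d' x' y' ->
          real e (push e (bp_in1 bA) (pull e (bp_pr1 bZ) d)
                  + push e (bp_in2 bA) (pull e (bp_pr2 bZ) d'))
            (comp (bp_in1 bB) (comp x (bp_pr1 bA))
               + comp (bp_in2 bB) (comp x' (bp_pr2 bA)))
            (comp (bp_in1 bZ) (comp y (bp_pr1 bB))
               + comp (bp_in2 bZ) (comp y' (bp_pr2 bB))))].

Definition ET3 : Prop :=
  forall (A B Z A' B' Z' : C) (d : Ext e Z A) (d' : Ext e Z' A')
    (x : hom A B) (y : hom B Z) (x' : hom A' B') (y' : hom B' Z')
    (a : hom A A') (b : hom B B'),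
    real e d x y -> real e d' x' y' -> comp b x = comp x' a ->
    exists c : hom Z Z', comp c y = comp y' b /\ push e a d = pull e c d'.

Definition ET3op : Prop :=
  forall (A B Z A' B' Z' : C) (d : Ext e Z A) (d' : Ext e Z' A')
    (x : hom A B) (y : hom B Z) (x' : hom A' B') (y' : hom B' Z')
    (b : hom B B') (c : hom Z Z'),
    real e d x y -> real e d' x' y' -> comp y' b = comp c y ->
    exists a : hom A A', comp x' a = comp b x /\ push e a d = pull e c d'.

Definition ET4 : Prop :=
  forall (A B D Cc F : C) (d : Ext e D A) (d' : Ext e F B)
    (f : hom A B) (f' : hom B D) (g : hom B Cc) (g' : hom Cc F),
    real e d f f' -> real e d' g g' ->
    exists (E : C) (h : hom A Cc) (h' : hom Cc E) (d'' : Ext e E A)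
      (dd : hom D E) (ee : hom E F),
      [/\ real e d'' h h',
          real e (push e f' d') dd ee,
          pull e dd d'' = d,
          push e f d'' = pull e ee d' &
          [/\ comp g f = h, comp dd f' = comp h' g & comp ee h' = g']].

Definition ET4op : Prop :=
  forall (D A B F Cc : C) (d : Ext e B D) (d' : Ext e Cc F)
    (f : hom D A) (f' : hom A B) (g : hom F B) (g' : hom B Cc),
    real e d f f' -> real e d' g g' ->
    exists (E : C) (h : hom E A) (h' : hom A Cc) (d'' : Ext e Cc E)
      (dd : hom D E) (ee : hom E F),
      [/\ real e d'' h h',
          real e (pull e g d) dd ee,
          d' = push e ee d'',
          push e dd d = pull e g' d'' &
          [/\ comp h dd = f, comp f' h = comp g ee & h' = comp g' f']].

Definition isExtriangulated : Prop :=
  isAdditive C /\ ET1 /\ ET2 /\ ET3 /\ ET3op /\ ET4 /\ ET4op.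

Definition Etriangle (A B Z : C) : Prop :=
  exists (x : hom A B) (y : hom B Z) (d : Ext e Z A), real e d x y.

Definition projective (P : C) : Prop :=
  forall (A B Z : C) (x : hom A B) (y : hom B Z) (d : Ext e Z A) (c : hom P Z),
    real e d x y -> exists b : hom P B, comp y b = c.
Definition injective (I : C) : Prop :=
  forall (A B Z : C) (x : hom A B) (y : hom B Z) (d : Ext e Z A) (a : hom A I),
    real e d x y -> exists b : hom B I, comp b x = a.
Definition enough_projectives : Prop :=
  forall Z : C, exists (A P : C) (x : hom A P) (y : hom P Z) (d : Ext e Z A),
    projective P /\ real e d x y.
Definition enough_injectives : Prop :=
  forall A : C, exists (I Z : C) (x : hom A I) (y : hom I Z) (d : Ext e Z A),
    injective I /\ real e d x y.

(* Higher extensions.  ExtVanish n X Y  means  E^{n+1}(X, Y) = 0, where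
   E^{n+1}(X,Y) = E(Omega^n X, Y) and Omega X is the first term of an
   E-triangle  Omega X -> P -> X --> with P projective. *)
Fixpoint ExtVanish (n : nat) (X Y : C) : Prop :=
  match n with
  | 0 => forall d : Ext e X Y, d = 0
  | n'.+1 => forall (K P : C) (x : hom K P) (y : hom P X) (d : Ext e X K),
      projective P -> real e d x y -> ExtVanish n' K Y
  end.

Definition subcategory (T : C -> Prop) : Prop :=
  [/\ (forall X Y : C, T X -> iso X Y -> T Y),
      (exists Z : C, idm Z = 0 /\ T Z)
    & (forall (X Y : C) (S : biprod X Y), T X -> T Y -> T (bp_obj S))].

Definition self_orthogonal (T : C -> Prop) : Prop :=
  forall (n : nat) (T1 T2 : C), T T1 -> T T2 -> ExtVanish n T1 T2.

Definition perp (T : C -> Prop) (Y : C) : Prop :=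
  forall (n : nat) (T1 : C), T T1 -> ExtVanish n T1 Y.

Definition TX (T : C -> Prop) (A : C) : Prop :=
  exists (K Tn : nat -> C), K 0%N = A /\
    forall i : nat, [/\ T (Tn i), perp T (K i.+1) &
      exists (x : hom (K i.+1) (Tn i)) (y : hom (Tn i) (K i))
             (d : Ext e (K i) (K i.+1)), real e d x y].

Definition closed_under_extensions (S : C -> Prop) : Prop :=
  forall (A B Z : C) (x : hom A B) (y : hom B Z) (d : Ext e Z A),
    real e d x y -> S A -> S Z -> S B.

Definition closed_under_cones_of_inflations (S : C -> Prop) : Prop :=
  forall (A B Z : C) (x : hom A B) (y : hom B Z) (d : Ext e Z A),
    real e d x y -> S A -> S B -> S Z.
End Extri.

Definition closed_under_summands (C : PreAddCat) (S : C -> Prop) : Prop :=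
  forall (X Y : C) (b : biprod X Y), S (bp_obj b) -> S X.
Arguments closed_under_summands {C} S.

Arguments isExtriangulated {C} e.
Arguments enough_projectives {C} e.
Arguments enough_injectives {C} e.
Arguments projective {C} e P.
Arguments injective {C} e I.
Arguments ExtVanish {C} e n X Y.
Arguments self_orthogonal {C} e T.
Arguments perp {C} e T Y.
Arguments TX {C} e T A.
Arguments subcategory {C} T.
Arguments closed_under_extensions {C} e S.
Arguments closed_under_cones_of_inflations {C} e S.

(* An object of _T X is one with a step K -> T0 -> X, T0 in T, whose kernel K
   lies in T^perp and again in _T X; so each closure property is proved by
   coinduction, producing such a step for the new object whose kernel again
   has the property.  T^perp is closed under extensions by the long exact
   Ext-sequence, and objects of _T X lie in T^perp by self-orthogonality.
   For an extension A -> B -> Z of objects of _T X, the class of the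
   triangle dies on the T-step T_Z -> Z (as A is in T^perp), which gives a
   horseshoe: a deflation T_A (+) T_Z -> B whose kernel is an extension of
   K_A by K_Z.  Cones and summands then follow from (ET4)^op applied to a
   step of B, resp. of X (+) Y. *)

From Pilot Require Import Defs.
From mathcomp Require Import all_boot all_algebra.
From Stdlib Require Import IndefiniteDescription.
Import Pilot.Defs.
Import GRing.Theory.
Local Open Scope ring_scope.
Set Implicit Arguments.
Unset Strict Implicit.

Arguments compA {p A B C D} f g h.
Arguments comp1m {p A B} f.
Arguments compm1 {p A B} f.
Arguments compDl {p A B C} f g h.
Arguments compDr {p A B C} f g h.
Arguments bp_ax {C X Y} b.

Section Preadditive.
Variable C : PreAddCat.

Lemma comp0l (A B D : C) (f : hom A B) : comp (0 : hom B D) f = 0.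
Proof. by apply: (addrI (comp (0 : hom B D) f)); rewrite -compDl !addr0. Qed.

Lemma comp0r (A B D : C) (f : hom B D) : comp f (0 : hom A B) = 0.
Proof. by apply: (addrI (comp f (0 : hom A B))); rewrite -compDr !addr0. Qed.

Lemma compNl (A B D : C) (f : hom B D) (g : hom A B) : comp (- f) g = - comp f g.
Proof. by apply/eqP; rewrite -addr_eq0 -compDl addNr comp0l. Qed.

Lemma compNr (A B D : C) (f : hom B D) (g : hom A B) : comp f (- g) = - comp f g.
Proof. by apply/eqP; rewrite -addr_eq0 -compDr addNr comp0r. Qed.

Lemma compBl (A B D : C) (f f' : hom B D) (g : hom A B) :
  comp (f - f') g = comp f g - comp f' g.
Proof. by rewrite compDl compNl. Qed.

Lemma compBr (A B D : C) (f : hom B D) (g g' : hom A B) :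
  comp f (g - g') = comp f g - comp f g'.
Proof. by rewrite compDr compNr. Qed.

Lemma hom_from_zero (Z0 X : C) (f : hom Z0 X) : idm Z0 = 0 -> f = 0.
Proof. by move=> hz; rewrite -(compm1 f) hz comp0r. Qed.

Section BiprodAx.
Variables (X Y S : C) (i1 : hom X S) (i2 : hom Y S) (p1 : hom S X) (p2 : hom S Y).
Hypothesis hb : biprod_ax C i1 i2 p1 p2.

Lemma biprod_ax_swap : biprod_ax C i2 i1 p2 p1.
Proof. by case: hb => *; split=> //; rewrite addrC. Qed.

Lemma biprod_ax_iso (S' : C) (b : hom S S') (b' : hom S' S) :
  comp b' b = idm S -> comp b b' = idm S' ->
  biprod_ax C (comp b i1) (comp b i2) (comp p1 b') (comp p2 b').
Proof.
move=> hb'b hbb'; case: hb => h11 h22 h12 h21 hsum.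
have conj (Q R : C) (f : hom Q S) (g : hom S R) :
  comp (comp g b') (comp b f) = comp g f.
  by rewrite compA -(compA g) hb'b compm1.
split; rewrite ?conj //.
by rewrite -!compA -compDr !compA -compDl hsum comp1m.
Qed.

Lemma biprod_ax_shear (u : hom Y X) :
  biprod_ax C i1 (i2 - comp i1 u) (p1 + comp u p2) p2.
Proof.
case: hb => h11 h22 h12 h21 hsum; split=> //.
- by rewrite compDl h11 -compA h21 comp0r addr0.
- by rewrite compBr h22 compA h21 comp0l subr0.
- rewrite compDl !compBr h12 compA h11 comp1m -!compA h22 (compA p2) h21.
  by rewrite comp0l comp0r compm1 sub0r subr0 addNr.
- by rewrite compDr compBl compA addrACA subrr addr0.
Qed.
End BiprodAx.

Definition biprod_swap (X Y : C) (b : biprod X Y) : biprod Y X :=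
  @Build_biprod C Y X (bp_obj b) _ _ _ _ (biprod_ax_swap (bp_ax b)).

Section ZeroObject.
Variable Z0 : C.
Hypothesis hz : idm Z0 = 0.

Lemma biprod_ax_zero_r (K : C) : biprod_ax C (idm K) (0 : hom Z0 K) (idm K) 0.
Proof. by split; rewrite ?comp1m ?comp0l ?comp0r ?addr0. Qed.

Lemma biprod_ax_zero_iso (X Y : C) (f : hom X Y) (g : hom Y X) :
  comp g f = idm X -> comp f g = idm Y -> biprod_ax C (0 : hom Z0 X) g 0 f.
Proof. by move=> hgf hfg; split; rewrite ?comp0l ?comp0r ?add0r. Qed.

Definition biprod_zero_r (K : C) : biprod K Z0 :=
  @Build_biprod C K Z0 K _ _ _ _ (biprod_ax_zero_r K).

Definition biprod_zero_iso (X Y : C) (f : hom X Y) (g : hom Y X)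
    (hgf : comp g f = idm X) (hfg : comp f g = idm Y) : biprod Z0 Y :=
  @Build_biprod C Z0 Y X _ _ _ _ (biprod_ax_zero_iso hgf hfg).
End ZeroObject.
End Preadditive.

Section Extriangulated.
Variables (C : PreAddCat) (e : ExtriData C).
Hypotheses (hadd : isAdditive C) (h1 : ET1 C e) (h2 : ET2 C e) (h3 : ET3 C e)
  (h3o : ET3op C e) (h4 : ET4 C e) (h4o : ET4op C e).

Lemma zero_object_exists : exists Z0 : C, idm Z0 = 0.
Proof. by case: hadd. Qed.

Lemma biprod_exists (X Y : C) : inhabited (biprod X Y).
Proof.
case: hadd => _ /(_ X Y) [S [i1 [i2 [p1 [p2 hb]]]]].
exact: inhabits (@Build_biprod C X Y S i1 i2 p1 p2 hb).
Qed.

Lemma pushBr (Z A A' : C) (a : hom A A') (d1 d2 : Ext e Z A) :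
  push e a (d1 - d2) = push e a d1 - push e a d2.
Proof. by case: h1. Qed.

Lemma pullBr (Z Z' A : C) (c : hom Z' Z) (d1 d2 : Ext e Z A) :
  pull e c (d1 - d2) = pull e c d1 - pull e c d2.
Proof. by case: h1 => _ []. Qed.

Lemma pushDl (Z A A' : C) (a a' : hom A A') (d : Ext e Z A) :
  push e (a + a') d = push e a d + push e a' d.
Proof. by case: h1 => _ [] _ []. Qed.

Lemma pullDl (Z Z' A : C) (c c' : hom Z' Z) (d : Ext e Z A) :
  pull e (c + c') d = pull e c d + pull e c' d.
Proof. by case: h1 => _ [] _ [] _ []. Qed.

Lemma push1 (Z A : C) (d : Ext e Z A) : push e (idm A) d = d.
Proof. by case: h1 => _ [] _ [] _ [] _ []. Qed.

Lemma pull1 (Z A : C) (d : Ext e Z A) : pull e (idm Z) d = d.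
Proof. by case: h1 => _ [] _ [] _ [] _ [] _ []. Qed.

Lemma pushM (Z A A' A'' : C) (a : hom A A') (a' : hom A' A'') (d : Ext e Z A) :
  push e (comp a' a) d = push e a' (push e a d).
Proof. by case: h1 => _ [] _ [] _ [] _ [] _ [] _ []. Qed.

Lemma push_pullC (Z Z' A A' : C) (a : hom A A') (c : hom Z' Z) (d : Ext e Z A) :
  push e a (pull e c d) = pull e c (push e a d).
Proof. by case: h1 => _ [] _ [] _ [] _ [] _ [] _ [] _ []. Qed.

Lemma push0r (Z A A' : C) (a : hom A A') : push e a (0 : Ext e Z A) = 0.
Proof. by rewrite -(subrr (0 : Ext e Z A)) pushBr subrr. Qed.

Lemma pull0r (Z Z' A : C) (c : hom Z' Z) : pull e c (0 : Ext e Z A) = 0.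
Proof. by rewrite -(subrr (0 : Ext e Z A)) pullBr subrr. Qed.

Lemma pull0l (Z Z' A : C) (d : Ext e Z A) : pull e (0 : hom Z' Z) d = 0.
Proof. by apply: (addrI (pull e (0 : hom Z' Z) d)); rewrite -pullDl !addr0. Qed.

Lemma real_exists (Z A : C) (d : Ext e Z A) :
  exists B (x : hom A B) (y : hom B Z), real e d x y.
Proof. by case: h2 => [[hex _ _]] _ _; apply: hex. Qed.

Lemma real_equiv (Z A B B' : C) (d : Ext e Z A) (x : hom A B) (y : hom B Z)
    (x' : hom A B') (y' : hom B' Z) :
  real e d x y -> (real e d x' y' <-> seq_equiv C x y x' y').
Proof. by case: h2 => [[_ heq _]] _ _; apply: heq. Qed.

Lemma real_morph (A Z A' Z' B B' : C) (d : Ext e Z A) (d' : Ext e Z' A')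
    (a : hom A A') (c : hom Z Z') (x : hom A B) (y : hom B Z)
    (x' : hom A' B') (y' : hom B' Z') :
  push e a d = pull e c d' -> real e d x y -> real e d' x' y' ->
  exists b : hom B B', comp b x = comp x' a /\ comp y' b = comp c y.
Proof. by case: h2 => [[_ _ hmor]] _ _; apply: hmor. Qed.

Lemma real_split (A Z : C) (S : biprod A Z) :
  real e (0 : Ext e Z A) (bp_in1 S) (bp_pr2 S).
Proof. by case: h2. Qed.

Lemma real_sum (A A' B B' Z Z' : C) (bA : biprod A A') (bB : biprod B B')
    (bZ : biprod Z Z') (d : Ext e Z A) (d' : Ext e Z' A')
    (x : hom A B) (y : hom B Z) (x' : hom A' B') (y' : hom B' Z') :
  real e d x y -> real e d' x' y' ->
  real e (push e (bp_in1 bA) (pull e (bp_pr1 bZ) d)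
          + push e (bp_in2 bA) (pull e (bp_pr2 bZ) d'))
    (comp (bp_in1 bB) (comp x (bp_pr1 bA)) + comp (bp_in2 bB) (comp x' (bp_pr2 bA)))
    (comp (bp_in1 bZ) (comp y (bp_pr1 bB)) + comp (bp_in2 bZ) (comp y' (bp_pr2 bB))).
Proof. by case: h2 => _ _; apply. Qed.

Lemma ET3_real (A B Z A' B' Z' : C) (d : Ext e Z A) (d' : Ext e Z' A')
    (x : hom A B) (y : hom B Z) (x' : hom A' B') (y' : hom B' Z')
    (a : hom A A') (b : hom B B') :
  real e d x y -> real e d' x' y' -> comp b x = comp x' a ->
  exists c : hom Z Z', comp c y = comp y' b /\ push e a d = pull e c d'.
Proof. exact: h3. Qed.

Lemma ET3op_real (A B Z A' B' Z' : C) (d : Ext e Z A) (d' : Ext e Z' A')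
    (x : hom A B) (y : hom B Z) (x' : hom A' B') (y' : hom B' Z')
    (b : hom B B') (c : hom Z Z') :
  real e d x y -> real e d' x' y' -> comp y' b = comp c y ->
  exists a : hom A A', comp x' a = comp b x /\ push e a d = pull e c d'.
Proof. exact: h3o. Qed.

Lemma ET4_real (A B D Cc F : C) (d : Ext e D A) (d' : Ext e F B)
    (f : hom A B) (f' : hom B D) (g : hom B Cc) (g' : hom Cc F) :
  real e d f f' -> real e d' g g' ->
  exists (E : C) (h : hom A Cc) (h' : hom Cc E) (d'' : Ext e E A)
    (dd : hom D E) (ee : hom E F),
    [/\ real e d'' h h', real e (push e f' d') dd ee, pull e dd d'' = d,
        push e f d'' = pull e ee d' &
        [/\ comp g f = h, comp dd f' = comp h' g & comp ee h' = g']].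
Proof. exact: h4. Qed.

Lemma ET4op_real (D A B F Cc : C) (d : Ext e B D) (d' : Ext e Cc F)
    (f : hom D A) (f' : hom A B) (g : hom F B) (g' : hom B Cc) :
  real e d f f' -> real e d' g g' ->
  exists (E : C) (h : hom E A) (h' : hom A Cc) (d'' : Ext e Cc E)
    (dd : hom D E) (ee : hom E F),
    [/\ real e d'' h h', real e (pull e g d) dd ee, d' = push e ee d'',
        push e dd d = pull e g' d'' &
        [/\ comp h dd = f, comp f' h = comp g ee & h' = comp g' f']].
Proof. exact: h4o. Qed.

Lemma real_Etriangle (A B Z : C) (d : Ext e Z A) (x : hom A B) (y : hom B Z) :
  real e d x y -> Etriangle C e A B Z.
Proof. by exists x, y, d. Qed.

Section Factorization.
Variables (A B Z : C) (d : Ext e Z A) (x : hom A B) (y : hom B Z).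
Hypothesis hr : real e d x y.

Lemma push_inflation_eq0 : push e x d = 0.
Proof.
have [S] := biprod_exists B Z.
have [c [_ ->]] := ET3_real (a := x) (b := bp_in1 S) hr (real_split S) erefl.
exact: pull0r.
Qed.

Lemma push_eq0_extends (X : C) (h : hom A X) :
  push e h d = 0 -> exists g : hom B X, comp g x = h.
Proof.
move=> hh; have [S] := biprod_exists X Z.
have he : push e h d = pull e (idm Z) 0 by rewrite pull1.
have [b [hb _]] := real_morph he hr (real_split S).
exists (comp (bp_pr1 S) b).
by rewrite -compA hb compA; case: (bp_ax S) => -> *; rewrite comp1m.
Qed.

Lemma pull_eq0_lifts (X : C) (f : hom X Z) :
  pull e f d = 0 -> exists g : hom X B, comp y g = f.
Proof.
move=> hf; have [S] := biprod_exists A X.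
have he : push e (idm A) 0 = pull e f d by rewrite push1.
have [b [_ hb]] := real_morph he (real_split S) hr.
exists (comp b (bp_in2 S)).
by rewrite compA hb -compA; case: (bp_ax S) => _ -> *; rewrite compm1.
Qed.

Lemma deflation_kernel_factors (X : C) (k : hom X B) :
  comp y k = 0 -> exists a : hom X A, comp x a = k.
Proof.
move=> hk; have [S] := biprod_exists X Z.
have [|a [ha _]] := ET3op_real (b := comp k (bp_pr1 S)) (c := 0) (real_split S) hr.
  by rewrite compA hk !comp0l.
exists a; rewrite ha -compA.
by case: (bp_ax S) => -> *; rewrite compm1.
Qed.

Lemma push_of_lift (K T0 : C) (dl : Ext e Z K) (i : hom K T0) (q : hom T0 Z)
    (g : hom T0 B) :
  real e dl i q -> comp y g = q -> exists u : hom K A, push e u dl = d.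
Proof.
move=> hrl hg.
have [|u [_ hu]] := ET3op_real (b := g) (c := idm Z) hrl hr.
  by rewrite hg comp1m.
by exists u; rewrite hu pull1.
Qed.

End Factorization.

Lemma pull_eq0_push (A K T0 Z : C) (dl : Ext e Z K) (i : hom K T0) (q : hom T0 Z)
    (d : Ext e Z A) :
  real e dl i q -> pull e q d = 0 -> exists u : hom K A, push e u dl = d.
Proof.
move=> hrl hq; have [B [x [y hr]]] := real_exists d.
have [g hg] := pull_eq0_lifts hr hq.
exact: (push_of_lift hr hrl hg).
Qed.

Lemma projective_push_surj (A K P Z : C) (d : Ext e Z A) (dl : Ext e Z K)
    (i : hom K P) (p : hom P Z) :
  projective e P -> real e dl i p -> exists u : hom K A, push e u dl = d.
Proof.
move=> hP hrl; have [B [x [y hr]]] := real_exists d.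
have [g hg] := hP A B Z x y d p hr.
exact: (push_of_lift hr hrl hg).
Qed.

Lemma real_zero_biprod (A B Z : C) (x : hom A B) (y : hom B Z) :
  real e (0 : Ext e Z A) x y -> exists (r : hom B A) (s : hom Z B), biprod_ax C x s r y.
Proof.
move=> hr; have [S] := biprod_exists A Z.
have [b [b' [hb'b hbb' <- hy]]] := (real_equiv _ _ (real_split S)).1 hr.
have -> : y = comp (bp_pr2 S) b' by rewrite -hy -compA hbb' compm1.
exists (comp (bp_pr1 S) b'), (comp b (bp_in2 S)).
exact: (biprod_ax_iso (bp_ax S) hb'b hbb').
Qed.

Lemma real_zero_iso (K E Z0 : C) (x : hom K E) (y : hom E Z0) :
  idm Z0 = 0 -> real e (0 : Ext e Z0 K) x y -> iso K E.
Proof.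
move=> hz /real_zero_biprod [r [s [hrx _ _ _ hsum]]].
by exists x, r; rewrite (hom_from_zero s hz) comp0l addr0 in hsum.
Qed.

Lemma deflation_iso (K T0 X Y : C) (dl : Ext e X K) (x : hom K T0) (q : hom T0 X)
    (f : hom X Y) (g : hom Y X) :
  comp g f = idm X -> comp f g = idm Y -> real e dl x q ->
  exists E (x' : hom E T0) (d' : Ext e Y E), real e d' x' (comp f q) /\ iso K E.
Proof.
move=> hgf hfg hr; have [Z0 hz] := zero_object_exists.
have hsplit := real_split (biprod_zero_iso hz hgf hfg).
have [E [x' [h' [d' [dd [ee [hrE hKE _ _ [_ _ hh']]]]]]]] := ET4op_real hr hsplit.
exists E, x', d'; rewrite -hh'; split=> //.
by rewrite pull0l in hKE; apply: real_zero_iso hKE.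
Qed.

Lemma split_retraction_pushing_to (A E K T0 Z : C) (dd : hom A E) (ee : hom E K)
    (d'' : Ext e Z E) (dl : Ext e Z K) (i : hom K T0) (q : hom T0 Z) (d : Ext e Z A) :
  real e 0 dd ee -> real e dl i q -> push e ee d'' = dl ->
  pull e q d'' = 0 -> pull e q d = 0 ->
  exists (r : hom E A) (s : hom K E), biprod_ax C dd s r ee /\ push e r d'' = d.
Proof.
move=> hsplit hrl hdl hq'' hq.
have [r0 [s0 hb]] := real_zero_biprod hsplit.
have [u hu] : exists u : hom K A, push e u dl = d - push e r0 d''.
  by apply: pull_eq0_push hrl _; rewrite pullBr -push_pullC hq hq'' push0r subrr.
exists (r0 + comp u ee), (s0 - comp dd u); split; first exact: biprod_ax_shear.
by rewrite pushDl pushM hdl hu addrC subrK.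
Qed.

Lemma horseshoe_deflation (A B Z K T0 : C) (M : biprod A T0) (d : Ext e Z A)
    (x : hom A B) (y : hom B Z) (dl : Ext e Z K) (i : hom K T0) (q : hom T0 Z) :
  real e d x y -> real e dl i q -> pull e q d = 0 ->
  exists K' (u : hom K' (bp_obj M)) (v : hom (bp_obj M) B) (d' : Ext e B K'),
    real e d' u v /\ iso K K'.
Proof.
move=> hr hrl hq.
(* E is a split extension of K by A with E -> A (+) T0 -> Z; after correcting
   the retraction E -> A it pushes the class of E -> A (+) T0 -> Z to [d]. *)
have [E [h [h' [d'' [dd [ee [hrE hsplit hdl hq'' _]]]]]]] :=
  ET4op_real (real_split M) hrl.
rewrite pull0r in hsplit; rewrite push0r in hq''.
have [r [s [hb hd]]] :=
  split_retraction_pushing_to hsplit hrl (esym hdl) (esym hq'') hq.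
pose N := @Build_biprod C K A E _ _ _ _ (biprod_ax_swap hb).
have [E' [u [v [d' [dd' [ee' [hr' hrA _ _ _]]]]]]] := ET4_real (real_split N) hrE.
rewrite /= hd in hrA.
have [b [b' [hb'b hbb' _ _]]] := (real_equiv _ _ hr).1 hrA.
have [K' [u' [d3 [hr3 hKK']]]] := deflation_iso hbb' hb'b hr'.
by exists K', u', (comp b' v), d3.
Qed.

(* [syzygy n X W]: W is reached from X by n projective covers, unrolled in the
   same order as the recursion of [ExtVanish]. *)
Fixpoint syzygy (n : nat) (X W : C) : Prop :=
  match n with
  | 0 => W = X
  | n'.+1 => exists (K P : C) (x : hom K P) (y : hom P X) (d : Ext e X K),
      [/\ projective e P, real e d x y & syzygy n' K W]
  end.

Lemma ExtVanishP (n : nat) (X Y : C) :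
  ExtVanish e n X Y <-> forall W, syzygy n X W -> ExtVanish e 0 W Y.
Proof.
elim: n X => [|n IH] X /=; first by split=> [hX W -> // | hX]; apply: hX.
split=> [hX W [K [P [x [y [d [hP hr hW]]]]]] | hX K P x y d hP hr].
  exact: (IH K).1 (hX K P x y d hP hr) W hW.
by apply/IH => W hW; apply: hX; exists K, P, x, y, d.
Qed.

Lemma syzygy_step (n : nat) (X W K P : C) (x : hom K P) (y : hom P W)
    (d : Ext e W K) :
  syzygy n X W -> projective e P -> real e d x y -> syzygy n.+1 X K.
Proof.
elim: n X => [|n IH] X /=; first by move=> <- hP hr; exists K, P, x, y, d.
move=> [K' [P' [x' [y' [d' [hP' hr' hW]]]]]] hP hr.
by exists K', P', x', y', d'; split=> //; apply: IH hW hP hr.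
Qed.

Section Orthogonal.
Variable T : C -> Prop.
Hypotheses (hP : enough_projectives e) (hT : subcategory T)
  (hso : self_orthogonal e T).

Definition T_syzygy (W : C) : Prop := exists n T1, T T1 /\ syzygy n T1 W.

Lemma T_syzygy_step (W K P : C) (x : hom K P) (y : hom P W) (d : Ext e W K) :
  T_syzygy W -> projective e P -> real e d x y -> T_syzygy K.
Proof.
move=> [n [T1 [hT1 hW]]] hPp hr.
by exists n.+1, T1; split=> //; apply: syzygy_step hW hPp hr.
Qed.

Lemma perpP (Y : C) : perp e T Y <-> forall W, T_syzygy W -> ExtVanish e 0 W Y.
Proof.
split=> [hY W [n [T1 [hT1 hW]]] | hY n T1 hT1].
  exact: (ExtVanishP n T1 Y).1 (hY n T1 hT1) W hW.
by apply/ExtVanishP => W hW; apply: hY; exists n, T1.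
Qed.

Lemma perp_iso (X Y : C) : iso X Y -> perp e T X -> perp e T Y.
Proof.
move=> [f [g [_ hfg]]] /perpP hX; apply/perpP => W hW d.
by rewrite -(push1 d) -hfg pushM (hX W hW (push e g d)) push0r.
Qed.

Lemma perp_summand (X Y : C) (b : biprod X Y) : perp e T (bp_obj b) -> perp e T Y.
Proof.
move=> /perpP hS; apply/perpP => W hW d; case: (bp_ax b) => _ h22 _ _ _.
by rewrite -(push1 d) -h22 pushM (hS W hW (push e (bp_in2 b) d)) push0r.
Qed.

Lemma perp_ext (A B Z : C) (d : Ext e Z A) (x : hom A B) (y : hom B Z) :
  real e d x y -> perp e T A -> perp e T Z -> perp e T B.
Proof.
move=> hr /perpP hA /perpP hZ; apply/perpP => W hW dB.
have [K [P [i [p [dl [hPp hrl]]]]]] := hP W.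
have [f hf] := projective_push_surj dB hPp hrl.
have hyf : push e (comp y f) dl = 0 by rewrite pushM hf; apply: hZ.
have [g hg] := push_eq0_extends hrl hyf.
have [g' hg'] := hPp _ _ _ _ _ _ g hr.
have [k hk] : exists k : hom K A, comp x k = f - comp g' i.
  by apply: (deflation_kernel_factors hr); rewrite compBr compA hg' hg subrr.
rewrite -hf -(subrK (comp g' i) f) -hk pushDl !pushM (push_inflation_eq0 hrl).
by rewrite (hA W hW (push e k dl)) !push0r addr0.
Qed.

Lemma perp_cone_T (K T0 X : C) (d : Ext e X K) (x : hom K T0) (q : hom T0 X) :
  real e d x q -> T T0 -> perp e T K -> perp e T X.
Proof.
move=> hr hT0 /perpP hK; apply/perpP => W hW dX.
have [L [P [i [p [dl [hPp hrl]]]]]] := hP W.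
have [f <-] := projective_push_surj dX hPp hrl.
have [g <-] := pull_eq0_lifts hr (hK L (T_syzygy_step hW hPp hrl) (pull e f d)).
have [n [T1 [hT1 hsyz]]] := hW.
by rewrite pushM ((ExtVanishP _ _ _).1 (hso n hT1 hT0) W hsyz (push e g dl)) push0r.
Qed.

Definition TX_step (S : C -> Prop) (X : C) : Prop :=
  exists K T0, [/\ T T0, perp e T K, S K & Etriangle C e K T0 X].

Lemma TX_unfold (X : C) : TX e T X -> TX_step (TX e T) X.
Proof.
move=> [Ks [Ts [<- hKs]]]; have [hT0 hK1 htri] := hKs 0%N.
exists (Ks 1%N), (Ts 0%N); split=> //.
by exists (fun i => Ks i.+1), (fun i => Ts i.+1); split=> // i; apply: hKs.
Qed.

Lemma TX_coind (S : C -> Prop) :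
  (forall X, S X -> TX_step S X) -> forall X, S X -> TX e T X.
Proof.
move=> hS X hX.
have step (p : {X : C | S X}) : {KT : C * C | [/\ T KT.2, perp e T KT.1, S KT.1
    & Etriangle C e KT.1 KT.2 (sval p)]}.
  apply: constructive_indefinite_description.
  by have [K [T0 hK]] := hS _ (proj2_sig p); exists (K, T0).
pose next (p : {X : C | S X}) : {X : C | S X} :=
  exist _ (sval (step p)).1 (let: And4 _ _ hK _ := proj2_sig (step p) in hK).
pose chain := fix chain n := if n is n'.+1 then next (chain n') else exist _ X hX.
exists (fun n => sval (chain n)), (fun n => (sval (step (chain n))).2).
by split=> // i; case: (proj2_sig (step (chain i))).
Qed.

Lemma TX_fold (X : C) : TX_step (TX e T) X -> TX e T X.
Proof.
apply: TX_coind => Y [K [T0 [hT0 hpK hK htri]]].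
by exists K, T0; split=> //; apply: TX_unfold.
Qed.

Lemma TX_perp (X : C) : TX e T X -> perp e T X.
Proof.
by move=> /TX_unfold [K [T0 [hT0 hpK _ [x [q [d hr]]]]]]; apply: perp_cone_T hr hT0 hpK.
Qed.

Lemma TX_iso (X Y : C) : iso X Y -> TX e T X -> TX e T Y.
Proof.
move=> hXY hX.
apply: (TX_coind (S := fun Y => exists2 X, TX e T X & iso X Y)); last by exists X.
move=> {hXY hX X} Y [X /TX_unfold [K [T0 [hT0 hpK hK [x [q [dl hr]]]]]]].
move=> [f [g [hgf hfg]]]; have [E [x' [d' [hr' hKE]]]] := deflation_iso hgf hfg hr.
exists E, T0; split=> //; last exact: real_Etriangle hr'.
- exact: perp_iso hKE hpK.
- by exists K.
Qed.

Lemma TX_ext (A B Z : C) (d : Ext e Z A) (x : hom A B) (y : hom B Z) :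
  real e d x y -> TX e T A -> TX e T Z -> TX e T B.
Proof.
move=> hr hA hZ.
apply: (TX_coind (S := fun B => exists A Z,
  [/\ Etriangle C e A B Z, TX e T A & TX e T Z]));
  last by exists A, Z; split=> //; exists x, y, d.
move=> {hr hA hZ A Z x y d} {}B [A [Z [[x [y [d hr]]] hA hZ]]].
have [KA [TA [hTA hpKA hKA [iA [qA [dA hrA]]]]]] := TX_unfold hA.
have [KZ [TZ [hTZ hpKZ hKZ [iZ [qZ [dZ hrZ]]]]]] := TX_unfold hZ.
have [M] := biprod_exists A TZ.
have hq : pull e qZ d = 0 := TX_perp hA 0 hTZ (pull e qZ d).
have [K' [u [v [d' [hr' hKK']]]]] := horseshoe_deflation M hr hrZ hq.
have [Z0 hz] := zero_object_exists.
have [bT] := biprod_exists TA TZ.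
(* the sum of the step of A with the trivial triangle 0 -> T_Z -> T_Z *)
have hrTZ := real_split (biprod_zero_iso hz (comp1m (idm TZ)) (comp1m (idm TZ))).
have hrsum := real_sum (biprod_zero_r hz KA) bT M hrA hrTZ.
have [E [h [h' [dE [dd [ee [hrE hrKE _ _ _]]]]]]] := ET4op_real hrsum hr'.
exists E, (bp_obj bT); split.
- by case: hT => _ _; apply.
- exact: perp_ext hrKE hpKA (perp_iso hKK' hpKZ).
- exists KA, K'; split; [exact: real_Etriangle hrKE | done | exact: TX_iso hKK' hKZ].
- exact: real_Etriangle hrE.
Qed.

Lemma TX_cone (A B Z : C) (d : Ext e Z A) (x : hom A B) (y : hom B Z) :
  real e d x y -> TX e T A -> TX e T B -> TX e T Z.
Proof.
move=> hr hA /TX_unfold [K [T0 [hT0 hpK hK [i [q [dl hrB]]]]]].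
have [E [h [h' [dE [dd [ee [hrE hrKE _ _ _]]]]]]] := ET4op_real hrB hr.
apply: TX_fold; exists E, T0; split=> //; last exact: real_Etriangle hrE.
- exact: perp_ext hrKE hpK (TX_perp hA).
- exact: TX_ext hrKE hK hA.
Qed.

Lemma TX_summand (X Y : C) (b : biprod X Y) : TX e T (bp_obj b) -> TX e T X.
Proof.
move=> hb.
apply: (TX_coind (S := fun X => exists Y (b : biprod X Y), TX e T (bp_obj b)));
  last by exists Y, b.
move=> {hb Y b} {}X [Y [b hb]].
have [K [T0 [hT0 hpK hK [i [q [dl hr]]]]]] := TX_unfold hb.
have [E [h [h' [dE [dd [ee [hrE hrKY _ _ _]]]]]]] :=
  ET4op_real hr (real_split (biprod_swap b)).
have [E' [_ [_ [_ [dd' [ee' [_ hrKX _ _ _]]]]]]] := ET4op_real hr (real_split b).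
have [bK] := biprod_exists K K.
have [bE] := biprod_exists E E'.
have hKK := TX_ext (real_split bK) hK hK.
have hEE := TX_ext (real_sum bK bE (biprod_swap b) hrKY hrKX) hKK hb.
exists E, T0; split=> //; last exact: real_Etriangle hrE.
- exact: perp_ext hrKY hpK (perp_summand (TX_perp hb)).
- by exists E', bE.
Qed.
End Orthogonal.
End Extriangulated.

Theorem lemma3p6 (C : PreAddCat) (e : ExtriData C)
  (hE : isExtriangulated e) (hKS : KrullSchmidt C)
  (hP : enough_projectives e) (hI : enough_injectives e)
  (T : C -> Prop) (hT : subcategory T) (hso : self_orthogonal e T) :
  [/\ closed_under_extensions e (TX e T),
      closed_under_summands (TX e T)
    & closed_under_cones_of_inflations e (TX e T)].
Proof.
case: hE => [hadd [h1 [h2 [h3 [h3o [h4 h4o]]]]]]; split.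
- by move=> A B Z x y d; apply: TX_ext.
- by move=> X Y; apply: TX_summand.
- by move=> A B Z x y d; apply: TX_cone.
Qed.
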